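(* Let $X$ be an affine scheme of finite type over $k$, and let $Z=X_{\operatorname{Vect}(X)}$ be the closed subscheme of $X$ defined by the ideal of $\mathcal O_X$ generated by $\operatorname{Vect}(X)(\mathcal{O}_X)=\{\xi(f):\xi\in\operatorname{Vect}(X),f\in\mathcal O_X\}$ (the locus where all vector fields vanish). Then $Z$ is the support of $M(X,\operatorname{Vect}(X))$, one has $M(X,\operatorname{Vect}(X))=\mathcal{D}_Z:=(\operatorname{Vect}(X)(\mathcal{O}_X))\cdot\mathcal{D}_X\backslash\mathcal{D}_X$, and $(\mathcal{O}_X)_{\operatorname{Vect}(X)}=\mathcal{O}_Z$.
   Context: $k$ is algebraically closed of characteristic zero. $\operatorname{Vect}(X)$ is the Lie algebra of all derivations of $\mathcal O_X$. $\mathcal D$-modules are right modules, defined on singular schemes via closed embeddings into smooth affine varieties; $M(X,\mathfrak v)$ is the quotient of $\mathcal D_X$ by the right submodule generated by $\mathfrak v$. The support of $(X,\mathfrak v)$ is the closed subscheme defined by the ideal $(\mathfrak v\cdot\mathcal D_X)\cap\mathcal O_X$ of $\mathcal O_X$. $(\mathcal O_X)_{\mathfrak v}=\mathcal O_X/\mathfrak v(\mathcal O_X)$. *)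

From HB Require Import structures.
From mathcomp Require Import all_boot all_order all_algebra.
From mathcomp Require Import mpoly.
Set Implicit Arguments. Unset Strict Implicit. Unset Printing Implicit Defensive.
Import GRing.Theory.
Local Open Scope ring_scope.

Section Defs.
Variable k : fieldType.

(* k-linear derivations of a commutative k-algebra R (= vector fields on Spec R). *)
Definition is_derivation (R : comAlgType k) (d : R -> R) : Prop :=
  (forall (a : k) (x y : R), d (a *: x + y) = a *: d x + d y) /\
  (forall x y : R, d (x * y) = x * d y + d x * y).

(* pi : O_V -> O_X is a surjective morphism of k-algebras (a closed embedding
   X -> V). *)
Definition surj_alg_morph (R S : comAlgType k) (pi : R -> S) : Prop :=
  [/\ forall (a : k) (x y : R), pi (a *: x + y) = a *: pi x + pi y,
      forall x y : R, pi (x * y) = pi x * pi y,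
      pi 1 = 1
    & forall s : S, exists r : R, pi r = s].

Variable n : nat.
Local Notation P := {mpoly k[n]}.

Definition mulop (f : P) : P -> P := fun g => f * g.

(* Grothendieck's differential operators on O_V = k[x_1..x_n] (V = affine n-space):
   order <= 0 : k-linear and O_V-linear; order <= m+1 : k-linear and every
   commutator [D, f] has order <= m. *)
Fixpoint diffop_le (m : nat) (D : P -> P) : Prop :=
  (forall (a : k) (x y : P), D (a *: x + y) = a *: D x + D y) /\
  match m with
  | 0 => forall f g : P, D (f * g) = f * D g
  | m'.+1 => forall f : P, diffop_le m' (fun g => D (f * g) - f * D g)
  end.

Definition diffop (D : P -> P) : Prop := exists m, diffop_le m D.

(* membership in the right ideal S . D_V of D_V generated by a set S of
   operators; the product in D_V is composition, (s . Q)(g) = s (Q g). *)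
Definition in_right_ideal (S : (P -> P) -> Prop) (Q : P -> P) : Prop :=
  exists l : seq ((P -> P) * (P -> P)),
    (forall i, (i < size l)%N -> S (nth (id, id) l i).1 /\ diffop (nth (id, id) l i).2) /\
    forall g : P, Q g = \sum_(p <- l) p.1 (p.2 g).

Definition in_vect_values (A : comAlgType k) (a : A) : Prop :=
  exists l : seq ((A -> A) * A),
    (forall i, (i < size l)%N -> is_derivation (nth (id, 0) l i).1) /\
    a = \sum_(p <- l) p.1 p.2.

Definition in_vect_ideal (A : comAlgType k) (a : A) : Prop :=
  exists l : seq (A * (A -> A) * A),
    (forall i, (i < size l)%N -> is_derivation (nth (0, id, 0) l i).1.2) /\
    a = \sum_(p <- l) p.1.1 * p.1.2 p.2.

End Defs.

From HB Require Import structures.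
From mathcomp Require Import all_boot all_order all_algebra.
From mathcomp Require Import mpoly.
From mathcomp Require Import ring.
Set Implicit Arguments. Unset Strict Implicit. Unset Printing Implicit Defensive.
Import GRing.Theory.
Local Open Scope ring_scope.

(* Every vector field xi on X = Spec A lifts to a derivation D of O_V: choose
   lifts c_j of xi(x_j) and take D = sum_j c_j d/dx_j, since a derivation along
   pi is determined by its values on the variables.  Hence a generator u.xi(a)
   of the ideal of Z is the image of h.D(b), and multiplication by h.D(b) is the
   element (hD).b - (bh)D of the right ideal.  Conversely, evaluating an element
   of the right ideal at 1 and applying pi lands in Vect(X)(O_X), and every
   lifted vector field D = sum_j D(x_j).d/dx_j has its coefficients D(x_j) in
   the ideal of Z.  Finally u.xi is again a vector field, so the ideal of Z is
   already spanned by the values xi(a). *)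

Section LinearFun.
Variables (k : fieldType) (U V : lmodType k) (f : U -> V).
Hypothesis f_lin : linear f.

(* Local: a global instance keyed on the variable [f] would be found for every
   function, leaving its linearity as an unprovable side goal. *)
#[local] HB.instance Definition _ := GRing.isLinear.Build k U V *:%R f f_lin.

Lemma linear_fun0 : f 0 = 0. Proof. exact: raddf0. Qed.

Lemma linear_funD x y : f (x + y) = f x + f y. Proof. exact: raddfD. Qed.

Lemma linear_funB x y : f (x - y) = f x - f y. Proof. exact: raddfB. Qed.

Lemma linear_fun_sum (I : Type) (r : seq I) (F : I -> U) :
  f (\sum_(i <- r) F i) = \sum_(i <- r) f (F i).
Proof. exact: raddf_sum. Qed.

End LinearFun.

Section VectorFields.
Variables (k : fieldType) (A : comAlgType k).

Lemma derivation_mull (u : A) (xi : A -> A) :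
  is_derivation xi -> is_derivation (fun x => u * xi x).
Proof.
move=> [xi_lin xi_mul]; split=> [a x y | x y].
  by rewrite xi_lin mulrDr scalerAr.
rewrite xi_mul; ring.
Qed.

Lemma in_vect_values0 : in_vect_values (0 : A).
Proof. by exists [::]; rewrite big_nil. Qed.

Lemma in_vect_valuesD (a b : A) :
  in_vect_values a -> in_vect_values b -> in_vect_values (a + b).
Proof.
move=> [l1 [hl1 ->]] [l2 [hl2 ->]]; exists (l1 ++ l2); split; last by rewrite big_cat.
move=> i; rewrite size_cat nth_cat => hi; case: ltnP => hi1; first exact: hl1.
by apply: hl2; rewrite -(ltn_add2l (size l1)) subnKC.
Qed.

Lemma in_vect_values_derivation (xi : A -> A) (a : A) :
  is_derivation xi -> in_vect_values (xi a).
Proof. by move=> hxi; exists [:: (xi, a)]; rewrite big_seq1; split => // -[]. Qed.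

Lemma in_vect_valuesE (a : A) : in_vect_values a <-> in_vect_ideal a.
Proof.
split=> [[l [hl ->]] | [l [hl ->]]].
  exists (map (fun p => (1, p.1, p.2)) l); split.
    by move=> i; rewrite size_map => hi; rewrite (nth_map (id, 0)) //; apply: hl.
  by rewrite big_map; apply: eq_bigr => p _; rewrite mul1r.
elim: l hl => [|p l IHl] hl; first by rewrite big_nil; apply: in_vect_values0.
rewrite big_cons; apply: in_vect_valuesD; last by apply: IHl => i; apply: (hl i.+1).
exact: (in_vect_values_derivation p.2 (derivation_mull p.1.1 (hl 0%N erefl))).
Qed.

End VectorFields.

Section PolynomialDerivations.
Variables (k : fieldType) (n : nat).
Local Notation P := {mpoly k[n]}.

Definition derivation_along (A : comAlgType k) (pi : P -> A) (L : P -> A) :=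
  linear L /\ forall g h, L (g * h) = pi g * L h + L g * pi h.

Lemma derivation_along_eq0 (A : comAlgType k) (pi : P -> A) (L : P -> A) :
  pi 1 = 1 -> derivation_along pi L -> (forall i, L 'X_i = 0) -> forall g, L g = 0.
Proof.
move=> pi1 [L_lin L_mul] LX0.
have L1 : L 1 = 0.
  have := L_mul 1 1; rewrite pi1 !mulr1 !mul1r.
  by move/(congr1 (fun z => z - L 1)); rewrite addrK subrr => /esym.
have LXm m : L 'X_[m] = 0.
  rewrite mpolyXE_id; apply: (big_ind (fun x => L x = 0)) => //.
    by move=> x y Lx Ly; rewrite L_mul Lx Ly mulr0 mul0r addr0.
  move=> i _; elim: (m i) => [|e IHe]; first by rewrite expr0.
  by rewrite exprS L_mul IHe LX0 mulr0 mul0r addr0.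
elim/mpolyind => [|c m p _ _ IHp]; first exact: linear_fun0.
by rewrite L_lin LXm IHp scaler0 addr0.
Qed.

Lemma derivation_along_eq (A : comAlgType k) (pi : P -> A) (L1 L2 : P -> A) :
  pi 1 = 1 -> derivation_along pi L1 -> derivation_along pi L2 ->
  (forall i, L1 'X_i = L2 'X_i) -> forall g, L1 g = L2 g.
Proof.
move=> pi1 [lin1 mul1] [lin2 mul2] eqX g; apply/eqP; rewrite -subr_eq0; apply/eqP.
apply: (derivation_along_eq0 (L := fun g => L1 g - L2 g) pi1) => [|i].
  split=> [a x y | x y]; first by rewrite lin1 lin2 scalerBr; ring.
  by rewrite mul1 mul2; ring.
by rewrite eqX subrr.
Qed.

Definition deriv_comb (c : 'I_n -> P) (g : P) : P := \sum_(j < n) c j * mderiv j g.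

Lemma deriv_comb_derivation c : is_derivation (deriv_comb c).
Proof.
split=> [a x y | x y].
  rewrite /deriv_comb scaler_sumr -big_split /=.
  by apply: eq_bigr => j _; rewrite mderivD mderivZ mulrDr scalerAr.
rewrite /deriv_comb mulr_sumr mulr_suml -big_split /=.
by apply: eq_bigr => j _; rewrite mderivM; ring.
Qed.

Lemma mderivX1 (i j : 'I_n) : mderiv j ('X_i : P) = (i == j)%:R.
Proof.
rewrite mderivX mnm1E; case: eqP => [->|_]; last by rewrite scale0r.
suff -> : (U_(j) - U_(j))%MM = 0%MM by rewrite scale1r mpolyX0.
by apply/mnmP => l; rewrite mnmBE subnn mnm0E.
Qed.

Lemma deriv_comb_X c i : deriv_comb c 'X_i = c i.
Proof.
rewrite /deriv_comb (bigD1 i) //= mderivX1 eqxx mulr1 big1 ?addr0 //.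
by move=> j /negbTE hj; rewrite mderivX1 eq_sym hj mulr0.
Qed.

Lemma mderiv_derivation (j : 'I_n) : is_derivation (mderiv j : P -> P).
Proof.
split=> [a x y | x y]; first by rewrite mderivD mderivZ.
by rewrite mderivM; ring.
Qed.

Lemma derivationE (D : P -> P) :
  is_derivation D -> forall g, D g = deriv_comb (fun j => D 'X_j) g.
Proof.
move=> hD; apply: (derivation_along_eq (pi := id)) => // [|i].
  exact: deriv_comb_derivation.
by rewrite deriv_comb_X.
Qed.

Lemma derivation_lift (A : comAlgType k) (pi : P -> A) (xi : A -> A) :
  surj_alg_morph pi -> is_derivation xi ->
  exists D : P -> P, is_derivation D /\ forall g, pi (D g) = xi (pi g).
Proof.
move=> [pi_lin pi_mul pi1 pi_surj] [xi_lin xi_mul].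
have c_ex j : exists r : P, pi r == xi (pi 'X_j).
  by have [r <-] := pi_surj (xi (pi 'X_j)); exists r.
pose c j := xchoose (c_ex j).
have [D_lin D_mul] := deriv_comb_derivation c.
exists (deriv_comb c); split; first exact: deriv_comb_derivation.
apply: (derivation_along_eq pi1) => [| |i].
- split=> [a x y | x y]; first by rewrite D_lin pi_lin.
  by rewrite D_mul (linear_funD pi_lin) !pi_mul.
- split=> [a x y | x y]; first by rewrite pi_lin xi_lin.
  by rewrite pi_mul xi_mul.
- by rewrite deriv_comb_X (eqP (xchooseP (c_ex i))).
Qed.

End PolynomialDerivations.

Section DifferentialOperators.
Variables (k : fieldType) (n : nat).
Local Notation P := {mpoly k[n]}.

Lemma diffop_le_linear m (D : P -> P) : diffop_le m D -> linear D.
Proof. by case: m => [|m] []. Qed.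

Lemma diffop_le_ext m (D E : P -> P) :
  (forall g, D g = E g) -> diffop_le m D -> diffop_le m E.
Proof.
elim: m D E => [|m IHm] D E DE [D_lin D_com].
  by split=> [a x y | f g]; rewrite -!DE ?D_lin ?D_com.
split=> [a x y | f]; first by rewrite -!DE D_lin.
by apply: IHm (D_com f) => g; rewrite !DE.
Qed.

Lemma diffop_le_zero m : diffop_le m (fun _ : P => 0).
Proof.
elim: m => [|m IHm]; split=> [a x y | f]; rewrite ?scaler0 ?addr0 //.
  by move=> g; rewrite mulr0.
by apply: diffop_le_ext IHm => g; rewrite mulr0 subr0.
Qed.

Lemma diffop_le_add m (D E : P -> P) :
  diffop_le m D -> diffop_le m E -> diffop_le m (fun g => D g + E g).
Proof.
elim: m D E => [|m IHm] D E [D_lin D_com] [E_lin E_com].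
  split=> [a x y | f g]; first by rewrite D_lin E_lin scalerDr; ring.
  by rewrite D_com E_com mulrDr.
split=> [a x y | f]; first by rewrite D_lin E_lin scalerDr; ring.
by apply: diffop_le_ext (IHm _ _ (D_com f) (E_com f)) => g /=; ring.
Qed.

Lemma diffop_le_comp s m m' (D E : P -> P) : (m + m' <= s)%N ->
  diffop_le m D -> diffop_le m' E -> diffop_le s (fun g => D (E g)).
Proof.
elim: s m m' D E => [|s IHs] m m' D E.
  rewrite leqn0 addn_eq0 => /andP[/eqP -> /eqP ->] [D_lin D_com] [E_lin E_com].
  by split=> [a x y | f g]; rewrite ?E_lin ?D_lin ?E_com ?D_com.
move=> hs hD hE; have D_lin := diffop_le_linear hD; have E_lin := diffop_le_linear hE.
split=> [a x y | f]; first by rewrite E_lin D_lin.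
(* [DE, f] = D [E, f] + [D, f] E *)
apply: (@diffop_le_ext _
  (fun g => D (E (f * g) - f * E g) + (D (f * E g) - f * D (E g)))).
  by move=> g; rewrite (linear_funB D_lin); ring.
apply: diffop_le_add.
  case: m' hs hE {E_lin} => [|m'] hs [_ E_com].
    by apply: diffop_le_ext (diffop_le_zero s) => g; rewrite E_com subrr linear_fun0.
  by apply: IHs hD (E_com f); rewrite addnS ltnS in hs.
case: m hs hD {D_lin} => [|m] hs [_ D_com].
  by apply: diffop_le_ext (diffop_le_zero s) => g; rewrite D_com subrr.
by apply: IHs (D_com f) hE; rewrite addSn ltnS in hs.
Qed.

Lemma diffop_comp (D E : P -> P) :
  diffop D -> diffop E -> diffop (fun g => D (E g)).
Proof. by move=> [m hD] [m' hE]; exists (m + m')%N; apply: diffop_le_comp hD hE. Qed.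

Lemma diffop_id : diffop (fun g : P => g).
Proof. by exists 0%N. Qed.

Lemma diffop_le0_mulop (b : P) : diffop_le 0 (mulop b).
Proof. by split=> [a x y | f g]; rewrite /mulop; [rewrite mulrDr scalerAr | rewrite mulrCA]. Qed.

Lemma diffop_mulop (b : P) : diffop (mulop b).
Proof. by exists 0%N; apply: diffop_le0_mulop. Qed.

Lemma diffop_derivation (D : P -> P) : is_derivation D -> diffop D.
Proof.
move=> [D_lin D_mul]; exists 1%N; split=> // f.
by apply: diffop_le_ext (diffop_le0_mulop (D f)) => g; rewrite /mulop D_mul; ring.
Qed.

End DifferentialOperators.

Section RightIdeals.
Variables (k : fieldType) (n : nat).
Local Notation P := {mpoly k[n]}.
Implicit Types (S : (P -> P) -> Prop) (Q R : P -> P).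

Lemma in_right_ideal_ext S Q Q' :
  (forall g, Q g = Q' g) -> in_right_ideal S Q -> in_right_ideal S Q'.
Proof. by move=> QQ' [l [hl hQ]]; exists l; split=> // g; rewrite -QQ'. Qed.

Lemma in_right_ideal0 S : in_right_ideal S (fun _ => 0).
Proof. by exists [::]; split=> // g; rewrite big_nil. Qed.

Lemma in_right_ideal_add S Q1 Q2 : in_right_ideal S Q1 -> in_right_ideal S Q2 ->
  in_right_ideal S (fun g => Q1 g + Q2 g).
Proof.
move=> [l1 [hl1 hQ1]] [l2 [hl2 hQ2]]; exists (l1 ++ l2); split.
  move=> i; rewrite size_cat nth_cat => hi; case: ltnP => hi1; first exact: hl1.
  by apply: hl2; rewrite -(ltn_add2l (size l1)) subnKC.
by move=> g; rewrite big_cat hQ1 hQ2.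
Qed.

Lemma in_right_ideal_sum S (T : Type) (r : seq T) (F : T -> P -> P) :
  (forall x, in_right_ideal S (F x)) ->
  in_right_ideal S (fun g => \sum_(x <- r) F x g).
Proof.
move=> hF; elim: r => [|x r IHr].
  by apply: in_right_ideal_ext (in_right_ideal0 S) => g; rewrite big_nil.
by apply: in_right_ideal_ext (in_right_ideal_add (hF x) IHr) => g; rewrite big_cons.
Qed.

Lemma in_right_ideal_gen S s R : S s -> diffop R ->
  in_right_ideal S (fun g => s (R g)).
Proof. by move=> hs hR; exists [:: (s, R)]; split=> [[]|g] //; rewrite big_seq1. Qed.

Lemma in_right_ideal_genW S s : S s -> in_right_ideal S s.
Proof. by move=> hs; apply: in_right_ideal_ext (in_right_ideal_gen hs (@diffop_id k n)). Qed.

Lemma in_right_ideal_comp S Q R : in_right_ideal S Q -> diffop R ->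
  in_right_ideal S (fun g => Q (R g)).
Proof.
move=> [l [hl hQ]] hR; exists (map (fun p => (p.1, fun g => p.2 (R g))) l); split.
  move=> i; rewrite size_map => hi; rewrite (nth_map (id, id)) //=.
  by have [hs hp] := hl i hi; split=> //; apply: diffop_comp.
by move=> g; rewrite hQ big_map.
Qed.

Lemma in_right_ideal_sub S S' Q : (forall s, S s -> in_right_ideal S' s) ->
  in_right_ideal S Q -> in_right_ideal S' Q.
Proof.
move=> SS' [l [hl hQ]].
apply: (in_right_ideal_ext (Q := fun g => \sum_(p <- l) p.1 (p.2 g))) => // {Q hQ}.
elim: l hl => [|p l IHl] hl.
  by apply: in_right_ideal_ext (in_right_ideal0 S') => g; rewrite big_nil.
have [hs hR] := hl 0%N erefl.
apply: in_right_ideal_ext (in_right_ideal_add (in_right_ideal_comp (SS' _ hs) hR)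
  (IHl (fun i => hl i.+1))) => g.
by rewrite big_cons.
Qed.

End RightIdeals.

Section VectorFieldModule.
Variables (k : fieldType) (n : nat) (A : comAlgType k) (pi : {mpoly k[n]} -> A).
Hypothesis pi_alg : surj_alg_morph pi.
Local Notation P := {mpoly k[n]}.

(* Generators I + Vect(X)~ of the right ideal defining M(X, Vect X). *)
Definition vect_module_gens (D : P -> P) : Prop :=
  (exists f, pi f = 0 /\ D = mulop f) \/
  (is_derivation D /\
     exists xi : A -> A, is_derivation xi /\ forall g, pi (D g) = xi (pi g)).

Definition zero_locus_gens (D : P -> P) : Prop :=
  exists f, in_vect_ideal (pi f) /\ D = mulop f.

Let pi_lin : linear pi. Proof. by case: pi_alg. Qed.
Let pi_mul x y : pi (x * y) = pi x * pi y. Proof. by case: pi_alg. Qed.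
Let pi_surj a : exists r, pi r = a. Proof. by case: pi_alg. Qed.

Lemma mulop_lifted_value (D : P -> P) (xi : A -> A) (h b : P) :
  is_derivation D -> is_derivation xi -> (forall g, pi (D g) = xi (pi g)) ->
  in_right_ideal vect_module_gens (mulop (h * D b)).
Proof.
move=> hD hxi Dxi.
have gen_mull u : vect_module_gens (fun x => u * D x).
  right; split; first exact: derivation_mull.
  exists (fun x => pi u * xi x); split; first exact: derivation_mull.
  by move=> g; rewrite pi_mul Dxi.
apply: in_right_ideal_ext
  (in_right_ideal_add (in_right_ideal_gen (gen_mull h) (diffop_mulop b))
                      (in_right_ideal_genW (gen_mull (- (b * h))))).
by move=> g; rewrite /mulop (proj2 hD); ring.
Qed.

Lemma mulop_in_vect_module (f : P) :
  in_vect_ideal (pi f) -> in_right_ideal vect_module_gens (mulop f).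
Proof.
move=> [l [hl hf]].
suff [e [pi_e he]] : exists e, pi e = \sum_(p <- l) p.1.1 * p.1.2 p.2 /\
    in_right_ideal vect_module_gens (mulop e).
  have ker_fe : vect_module_gens (mulop (f - e)).
    by left; exists (f - e); rewrite (linear_funB pi_lin) hf pi_e subrr.
  apply: in_right_ideal_ext
    (in_right_ideal_add (in_right_ideal_genW ker_fe) he).
  by move=> g; rewrite /mulop; ring.
elim: l hl {hf} => [|[[u xi] a] l IHl] hl.
  exists 0; rewrite big_nil linear_fun0 //; split=> //.
  by apply: in_right_ideal_ext (in_right_ideal0 _) => g; rewrite /mulop mul0r.
have [e [pi_e he]] := IHl (fun i => hl i.+1).
have hxi : is_derivation xi := hl 0%N erefl.
have [[h <-] [b <-]] := (pi_surj u, pi_surj a).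
have [D [hD Dxi]] := derivation_lift pi_alg hxi.
exists (h * D b + e); split.
  by rewrite big_cons (linear_funD pi_lin) pi_mul Dxi pi_e.
apply: in_right_ideal_ext (in_right_ideal_add (mulop_lifted_value h b hD hxi Dxi) he).
by move=> g; rewrite /mulop mulrDl.
Qed.

Lemma vect_module_values (Q : P -> P) :
  in_right_ideal vect_module_gens Q -> forall g, in_vect_values (pi (Q g)).
Proof.
move=> [l [hl hQ]] g; rewrite hQ (linear_fun_sum pi_lin) {Q hQ}.
elim: l hl => [|p l IHl] hl; first by rewrite big_nil; apply: in_vect_values0.
rewrite big_cons; apply: in_vect_valuesD; last by apply: IHl => i; apply: (hl i.+1).
have [[[h [pi_h ->]] | [_ [xi [hxi Dxi]]]] _] := hl 0%N erefl.
  by rewrite /mulop pi_mul pi_h mul0r; apply: in_vect_values0.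
by rewrite Dxi; apply: in_vect_values_derivation.
Qed.

Lemma vect_module_gens_in_zero_locus (s : P -> P) :
  vect_module_gens s -> in_right_ideal zero_locus_gens s.
Proof.
move=> [[h [pi_h ->]] | [hD [xi [hxi Dxi]]]].
  apply: in_right_ideal_genW; exists h; split=> //; rewrite pi_h.
  by exists [::]; rewrite big_nil.
apply: (in_right_ideal_ext
  (Q := fun g => \sum_(j <- index_enum 'I_n) mulop (s 'X_j) (mderiv j g))).
  by move=> g; rewrite (derivationE hD).
apply: in_right_ideal_sum => j.
have gen_j : zero_locus_gens (mulop (s 'X_j)).
  exists (s 'X_j); split=> //; apply/in_vect_valuesE.
  by rewrite Dxi; apply: in_vect_values_derivation.
exact: in_right_ideal_gen gen_j (diffop_derivation (@mderiv_derivation _ _ j)).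
Qed.

End VectorFieldModule.

Theorem proposition3p1 (k : closedFieldType) (hk : [pchar k] =i pred0)
    (n : nat) (A : comAlgType k) (pi : {mpoly k[n]} -> A)
    (hpi : surj_alg_morph pi) :
  let gens : ({mpoly k[n]} -> {mpoly k[n]}) -> Prop := fun D =>
    (exists f, pi f = 0 /\ D = mulop f) \/
    (is_derivation D /\
       exists xi : A -> A, is_derivation xi /\ forall g, pi (D g) = xi (pi g)) in
  (* Z is the support of M(X, Vect X) *)
  (forall f : {mpoly k[n]}, in_right_ideal gens (mulop f) <-> in_vect_ideal (pi f)) /\
  (* M(X, Vect X) = D_Z *)
  (forall Q : {mpoly k[n]} -> {mpoly k[n]},
     in_right_ideal gens Q <->
     in_right_ideal (fun D => exists f, in_vect_ideal (pi f) /\ D = mulop f) Q) /\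
  (* (O_X)_{Vect X} = O_Z *)
  (forall a : A, in_vect_values a <-> in_vect_ideal a).
Proof.
move=> gens; split; [|split]; last exact: in_vect_valuesE.
- move=> f; split; last exact: mulop_in_vect_module.
  move=> /(vect_module_values hpi)/(_ 1); rewrite /mulop mulr1.
  by move/in_vect_valuesE.
- move=> Q; split; apply: in_right_ideal_sub => s.
    exact: vect_module_gens_in_zero_locus.
  by move=> [f [hf ->]]; apply: mulop_in_vect_module.
Qed.
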